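(* Let $J$ be an instance of $1\,||\,\sum w_jU_j$ with $d_{\#}$ distinct due dates, maximum due date $d_{\max}$ and maximum weight $w_{\max}$. Let $A$ be its solution vector and $A'$ its fractional solution vector. Then $0\le A'[k]-A[k]\le d_{\#}w_{\max}$ for every $k\in\{0,\ldots,d_{\max}\}$.
   Context: Jobs $j\in J=\{1,\ldots,n\}$ have processing times $p_j\in\mathbb{N}$, weights $w_j\in\mathbb{N}$ and due dates $d_j\in\mathbb{N}$; $d_{\max}=\max_jd_j$, $w_{\max}=\max_jw_j$. A set $S\subseteq J$ is a set of early jobs if for every $j\in J$, $\sum_{\ell\in S: d_\ell\le d_j}p_\ell\le d_j$ (equivalently, some single-machine non-preemptive schedule completes every job of $S$ by its due date). The solution vector is $(A[k])_{k=0}^{d_{\max}}$, $A[k]$ = maximum total weight of a set of early jobs with total processing time at most $k$. A feasible fractional solution is a real vector $0\le x_1,\ldots,x_n\le1$ with $\sum_{\ell:d_\ell\le d_j}p_\ell x_\ell\le d_j$ for all $j$; the fractional solution vector is $(A'[k])_{k=0}^{d_{\max}}$ with $A'[k]$ = maximum of $\sum_jw_jx_j$ over feasible fractional solutions with $\sum_jp_jx_j\le k$. *)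

From HB Require Import structures.
From mathcomp Require Import all_boot all_order all_algebra.
From mathcomp Require Import all_classical all_reals.
Set Implicit Arguments. Unset Strict Implicit. Unset Printing Implicit Defensive.
Import Order.TTheory GRing.Theory Num.Theory.

(* An instance of 1||sum w_j U_j: n jobs indexed by 'I_n, with
   processing times p, weights w and due dates d (natural numbers). *)

Definition early_set (n : nat) (p d : 'I_n -> nat) (S : {set 'I_n}) : bool :=
  [forall j : 'I_n, (\sum_(l in S | d l <= d j) p l <= d j)%N].

Definition sol_vec (n : nat) (p w d : 'I_n -> nat) (k : nat) : nat :=
  \max_(S : {set 'I_n} | early_set p d S && (\sum_(j in S) p j <= k)%N)
     \sum_(j in S) w j.

Local Open Scope ring_scope.

Definition frac_feasible (R : realType) (n : nat) (p d : 'I_n -> nat)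
    (x : 'I_n -> R) : Prop :=
  (forall j, 0 <= x j <= 1) /\
  (forall j, \sum_(l | (d l <= d j)%N) (p l)%:R * x l <= (d j)%:R).

(* Fractional solution vector: A'[k] = max (= sup; the maximum is attained)
   of sum_j w_j x_j over feasible fractional x with sum_j p_j x_j <= k. *)
Definition frac_sol_vec (R : realType) (n : nat) (p w d : 'I_n -> nat)
    (k : nat) : R :=
  sup [set v : R | exists x : 'I_n -> R,
         frac_feasible p d x /\ \sum_j (p j)%:R * x j <= k%:R /\
         v = \sum_j (w j)%:R * x j].

Definition num_due_dates (n : nat) (d : 'I_n -> nat) : nat :=
  size (undup (codom d)).
Definition dmax (n : nat) (d : 'I_n -> nat) : nat := \max_j d j.
Definition wmax (n : nat) (w : 'I_n -> nat) : nat := \max_j w j.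

From HB Require Import structures.
From mathcomp Require Import all_boot all_order all_algebra.
From mathcomp Require Import all_classical all_reals.
From mathcomp Require Import lra.
Import Order.TTheory GRing.Theory Num.Theory.
Local Open Scope ring_scope.

(* Both the early-set constraints and the budget only see, for each due date D,
   the processing volume of the jobs with due date D.  Inside one due-date class
   a fractional vector is rounded by pairwise exchanges: of two fractional jobs,
   shift processing volume to the one with the larger ratio w/p until one of
   them is integral.  What remains is an integral set of the class using no more
   volume, plus at most one fractional job, which costs at most w_max.  The
   union of these sets over the d_# classes is an early set within budget k, so
   A'[k] <= A[k] + d_# w_max; conversely the indicator of an optimal early set
   is a feasible fractional solution, so A[k] <= A'[k]. *)

Lemma sum_by_key {V : nmodType} {I : finType} {K : eqType} (key : I -> K)
    (P : pred I) (F : I -> V) :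
  \sum_(j | P j) F j
    = \sum_(D <- undup (codom key)) \sum_(j | P j && (key j == D)) F j.
Proof.
rewrite big_mkcond; under [RHS]eq_bigr do rewrite big_mkcond.
rewrite exchange_big /=; apply: eq_bigr => j _.
rewrite (bigD1_seq (key j)) ?undup_uniq ?mem_undup ?codom_f //= eqxx andbT.
by rewrite big1 ?addr0 // => D; rewrite eq_sym => /negbTE ->; rewrite andbF.
Qed.

Lemma ler_sum_by_key {R : numDomainType} {I : finType} {K : eqType}
    (key : I -> K) (P Q : pred I) (F G : I -> R) :
  (forall D, \sum_(j | P j && (key j == D)) F j
               <= \sum_(j | Q j && (key j == D)) G j) ->
  \sum_(j | P j) F j <= \sum_(j | Q j) G j.
Proof.
move=> le_classes; rewrite (sum_by_key key P) (sum_by_key key Q).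
by apply: ler_sum => D _.
Qed.

Lemma sumr_mul_indicator {R : pzSemiRingType} {I : finType} (S : {set I})
    (P : pred I) (F : I -> nat) :
  \sum_(j | P j) (F j)%:R * (j \in S)%:R = (\sum_(j in S | P j) F j)%:R :> R.
Proof.
rewrite natr_sum [RHS]big_mkcond [LHS]big_mkcond; apply: eq_bigr => j _ /=.
by case: (j \in S); case: (P j); rewrite ?mulr1 ?mulr0.
Qed.

Lemma exchange_to_denser {R : realFieldType} {P1 W1 P2 W2 a g : R} :
  0 <= P1 -> 0 < P2 -> W2 * P1 <= W1 * P2 ->
  0 <= a <= 1 -> 0 <= g <= 1 ->
  exists a' g', [/\ 0 <= a' <= 1, 0 <= g' <= 1, a' = 1 \/ g' = 0,
    P1 * a' + P2 * g' <= P1 * a + P2 * g &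
    W1 * a + W2 * g <= W1 * a' + W2 * g'].
Proof.
move=> P1_ge0 P2_gt0 ratio /andP[a_ge0 a_le1] /andP[g_ge0 g_le1].
have [P1_le | B_lt_P1] := lerP P1 (P1 * a + P2 * g).
- set g' := (P1 * a + P2 * g - P1) / P2.
  have e : P2 * g' = P1 * a + P2 * g - P1 by rewrite mulrC divfK ?gt_eqF.
  exists 1, g'; clearbody g'.
  have g'_ge0 : 0 <= g' by rewrite -(pmulr_rge0 _ P2_gt0) e subr_ge0.
  have g'_le_g : g' <= g by rewrite -(ler_pM2l P2_gt0) e; nra.
  have ratio_a : W2 * P1 * (1 - a) <= W1 * P2 * (1 - a).
    by rewrite ler_wpM2r ?subr_ge0.
  have eW : W2 * (P2 * g') = W2 * (P1 * a + P2 * g - P1) by rewrite e.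
  split; [lra | lra | by left | lra | rewrite -(ler_pM2l P2_gt0); nra].
- set a' := (P1 * a + P2 * g) / P1.
  have P1_gt0 : 0 < P1.
    by apply: (le_lt_trans _ B_lt_P1); rewrite addr_ge0 ?mulr_ge0 ?(ltW P2_gt0).
  have e : P1 * a' = P1 * a + P2 * g by rewrite mulrC divfK ?gt_eqF.
  exists a', 0; clearbody a'.
  have a_le_a' : a <= a' by rewrite -(ler_pM2l P1_gt0) e; nra.
  have a'_le1 : a' <= 1 by rewrite -(ler_pM2l P1_gt0) e; lra.
  have ratio_g : W2 * P1 * g <= W1 * P2 * g by rewrite ler_wpM2r.
  have eW : W1 * (P1 * a') = W1 * (P1 * a + P2 * g) by rewrite e.
  split; [lra | lra | by right | lra | rewrite -(ler_pM2l P1_gt0); nra].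
Qed.

Lemma exchange_pair {R : realFieldType} {P1 W1 P2 W2 a g : R} :
  0 <= P1 -> 0 <= P2 -> 0 <= W1 -> 0 <= W2 ->
  0 <= a <= 1 -> 0 <= g <= 1 ->
  exists a' g', [/\ 0 <= a' <= 1, 0 <= g' <= 1,
    [\/ a' = 0, a' = 1, g' = 0 | g' = 1],
    P1 * a' + P2 * g' <= P1 * a + P2 * g &
    W1 * a + W2 * g <= W1 * a' + W2 * g'].
Proof.
move=> P1_ge0 P2_ge0 W1_ge0 W2_ge0 a01 g01.
have [ratio | ratio] := lerP (W2 * P1) (W1 * P2).
- have [P2_0 | P2_gt0] := eqVneq P2 0.
    exists a, 1; rewrite P2_0; split=> //; [lra | by constructor 4 | lra | nra].
  have [|a' [g' [? ? [|] ? ?]]] := exchange_to_denser P1_ge0 _ ratio a01 g01.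
  + by rewrite lt_def P2_gt0.
  + by exists a', g'; split=> //; constructor 2.
  + by exists a', g'; split=> //; constructor 3.
- have P1_gt0 : 0 < P1 by nra.
  have ratio' : W1 * P2 <= W2 * P1 by lra.
  have [g' [a' [? ? [|] ? ?]]] := exchange_to_denser P2_ge0 P1_gt0 ratio' g01 a01.
  + by exists a', g'; split=> //; [constructor 4 | lra | lra].
  + by exists a', g'; split=> //; [constructor 1 | lra | lra].
Qed.

Section Rounding.
Context {R : realFieldType} {I : finType} (p w : I -> nat) {x : I -> R}.
Hypothesis x01 : forall j, 0 <= x j <= 1.

(* T is taken whole and the (at most one) job of F to the extent g. *)
Lemma round_seq (s : seq I) : uniq s ->
  exists (T F : {set I}) (g : R),
  [/\ {subset T :|: F <= s}, [disjoint T & F] && (#|F| <= 1)%N, 0 <= g <= 1,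
      \sum_(j in T) (p j)%:R + (\sum_(j in F) (p j)%:R) * g
        <= \sum_(j <- s) (p j)%:R * x j &
      \sum_(j <- s) (w j)%:R * x j
        <= \sum_(j in T) (w j)%:R + (\sum_(j in F) (w j)%:R) * g].
Proof.
elim: s => [_|a s IH] /=.
  exists finset.set0, finset.set0, 0.
  rewrite !big_set0 !big_nil mulr0 addr0 cards0 lexx ler01.
  split=> //; first by move=> j; rewrite !inE.
  by rewrite andbT; apply: eq_disjoint0 => j; rewrite inE.
case/andP => a_notin_s /IH [T [F [g [sub_s /andP[disTF F_le1] g01 hp hw]]]].
have a_notin : a \notin T :|: F by apply: contra a_notin_s => /sub_s.
rewrite inE negb_or in a_notin; case/andP: a_notin => aT aF.
have mem_as j : (j == a) || (j \in T :|: F) -> j \in a :: s.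
  by case/orP=> [/eqP ->|/sub_s js]; rewrite inE ?eqxx ?js ?orbT.
have sum_ge0 (c : I -> nat) : 0 <= \sum_(j in F) (c j)%:R :> R.
  by apply: sumr_ge0 => j _; apply: ler0n.
have [a' [g' [a'01 g'01 cases hp' hw']]] :=
  exchange_pair (ler0n R (p a)) (sum_ge0 p) (ler0n R (w a)) (sum_ge0 w) (x01 a) g01.
rewrite !big_cons.
case: cases => e; rewrite e ?mulr0 ?mulr1 ?add0r ?addr0 in hp' hw'.
- exists T, F, g'; rewrite disTF F_le1; split => //; [|lra|lra].
  by move=> j jTF; apply: mem_as; rewrite jTF orbT.
- exists (a |: T), F, g'; rewrite !big_setU1 //=.
  split; rewrite ?F_le1 ?andbT //; [| |lra|lra].
  + by move=> j aTF; apply: mem_as; move: aTF; rewrite !inE orbA.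
  + apply/pred0P => j /=; rewrite !inE andb_orl.
    case: (boolP (j \in T)) => [/(disjointFr disTF) -> | _].
      by rewrite !andbF.
    rewrite /= orbF.
    by case: eqP => [->|]; rewrite ?(negbTE aF).
- exists T, [set a], a'; rewrite !big_set1.
  split; rewrite ?cards1 ?andbT //; [| |lra|lra].
  + move=> j Ta; apply: mem_as; move: Ta.
    by rewrite !inE => /orP[|] ->; rewrite ?orbT.
  + by rewrite disjoint_sym disjoints1.
- have sumTF c : \sum_(j in T :|: F) (c j)%:R
                  = \sum_(j in T) (c j)%:R + \sum_(j in F) (c j)%:R :> R.
    by rewrite -bigU //; apply: eq_bigl => j; rewrite !inE.
  exists (T :|: F), [set a], a'; rewrite !big_set1 !sumTF.
  split; rewrite ?cards1 ?andbT //; [| |lra|lra].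
  + by move=> j TFa; apply: mem_as; move: TFa; rewrite !inE orbC.
  + by rewrite disjoint_sym disjoints1 inE negb_or aT aF.
Qed.

Lemma round_pred (P : pred I) : exists T : {set I},
  [/\ {subset T <= P},
      \sum_(j in T) (p j)%:R <= \sum_(j | P j) (p j)%:R * x j &
      \sum_(j | P j) (w j)%:R * x j <= \sum_(j in T) (w j)%:R + (\max_j w j)%:R].
Proof.
have [T [F [g [sub_s /andP[_ F_le1] /andP[g_ge0 g_le1] hp hw]]]] :=
  round_seq _ (filter_uniq P (index_enum_uniq I)).
rewrite !big_filter in hp hw; exists T; split.
- move=> j jT.
  by have := sub_s j; rewrite inE jT mem_filter => /(_ isT) /andP[].
- by apply: le_trans hp; rewrite lerDl mulr_ge0 ?sumr_ge0.
- apply: (le_trans hw); rewrite lerD2l.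
  apply: le_trans (_ : \sum_(j in F) (w j)%:R <= _); first by rewrite ler_piMr ?sumr_ge0.
  rewrite -natr_sum ler_nat.
  apply: (@leq_trans (\sum_(j in F) \max_i w i)).
    by apply: leq_sum => j _; apply: leq_bigmax.
  by rewrite sum_nat_const -[leqRHS]mul1n leq_mul2r F_le1 orbT.
Qed.

Lemma round_by_key {K : eqType} (key : I -> K) : exists S : {set I}, forall D,
  \sum_(j in S | key j == D) (p j)%:R <= \sum_(j | key j == D) (p j)%:R * x j /\
  \sum_(j | key j == D) (w j)%:R * x j
    <= \sum_(j in S | key j == D) (w j)%:R + (\max_j w j)%:R.
Proof.
have [T HT] := choice (fun D => round_pred (fun j => key j == D)).
exists [set j | j \in T (key j)] => D; have [subT hp hw] := HT D.
have classE j : (j \in [set j | j \in T (key j)]) && (key j == D) = (j \in T D).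
  rewrite inE; apply/andP/idP => [[jT /eqP <-] // | jT].
  by have /eqP kj := subT j jT; rewrite kj.
by rewrite !(eq_bigl _ _ classE).
Qed.
End Rounding.

Section Schedule.
Variables (R : realType) (n : nat) (p w d : 'I_n -> nat).

Lemma early_set_of_classwise {x : 'I_n -> R} {S : {set 'I_n}} :
  frac_feasible p d x ->
  (forall D, \sum_(j in S | d j == D) (p j)%:R
               <= \sum_(j | d j == D) (p j)%:R * x j) ->
  early_set p d S.
Proof.
move=> [x01 x_early] le_classes; apply/forallP => j0.
rewrite -(ler_nat R) natr_sum; apply: le_trans (x_early j0).
apply: (ler_sum_by_key d) => D.
have classE l : (d l <= d j0)%N && (d l == D) = (D <= d j0)%N && (d l == D).
  by case: eqP => [->|]; rewrite ?andbF.
under eq_bigl do rewrite -andbA classE andbCA.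
under [leRHS]eq_bigl do rewrite classE.
by case: (D <= d j0)%N => /=; rewrite ?big_pred0_eq ?le_classes.
Qed.

Lemma frac_value_le_sol_vec (k : nat) (x : 'I_n -> R) :
  frac_feasible p d x -> \sum_j (p j)%:R * x j <= k%:R ->
  \sum_j (w j)%:R * x j <= (sol_vec p w d k)%:R + (num_due_dates d * wmax w)%:R.
Proof.
move=> feas budget; have [S le_classes] := round_by_key p w feas.1 d.
have early : early_set p d S.
  by apply: (early_set_of_classwise feas) => D; have [] := le_classes D.
have within : (\sum_(j in S) p j <= k)%N.
  rewrite -(ler_nat R) natr_sum; apply: le_trans budget.
  by apply: (ler_sum_by_key d) => D; have [] := le_classes D.
have value : (\sum_(j in S) w j <= sol_vec p w d k)%N.
  by apply: leq_bigmax_cond; rewrite early within.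
rewrite (sum_by_key d); apply: le_trans (ler_sum _ (fun D _ => (le_classes D).2)) _.
rewrite big_split /= -sum_by_key big_const_seq count_predT iter_addr_0.
by rewrite natrM mulr_natl lerD2r -natr_sum ler_nat.
Qed.

Lemma sol_vec_frac_value (k : nat) : exists x : 'I_n -> R,
  [/\ frac_feasible p d x, \sum_j (p j)%:R * x j <= k%:R &
      (sol_vec p w d k)%:R = \sum_j (w j)%:R * x j].
Proof.
have set0_early : early_set p d finset.set0.
  by apply/forallP => j; rewrite big_pred0 // => l; rewrite inE.
pose within_k S := early_set p d S && (\sum_(j in S) p j <= k)%N.
have [|S /andP[early within] solE] :=
  @eq_bigmax_cond _ within_k (fun S : {set 'I_n} => (\sum_(j in S) w j)%N).
  apply/card_gt0P; exists finset.set0.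
  by rewrite /in_mem /= /within_k set0_early big_set0.
exists (fun j => (j \in S)%:R).
rewrite /sol_vec solE !sumr_mul_indicator !big_condT ler_nat; split=> //.
split=> j; first by case: (j \in S); rewrite ?lexx ?ler01.
by rewrite sumr_mul_indicator ler_nat; apply: (forallP early).
Qed.
End Schedule.

Theorem lemma18 (R : realType) (n : nat) (p w d : 'I_n -> nat) (k : nat) :
  (k <= dmax d)%N ->
  0 <= frac_sol_vec R p w d k - (sol_vec p w d k)%:R /\
  frac_sol_vec R p w d k - (sol_vec p w d k)%:R
    <= (num_due_dates d * wmax w)%:R.
Proof.
move=> _; rewrite /frac_sol_vec; set E := (X in sup X).
have E_sol : E (sol_vec p w d k)%:R.
  by have [x [feas budget ->]] := sol_vec_frac_value R n p w d k; exists x.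
have E_ub : ubound E ((sol_vec p w d k)%:R + (num_due_dates d * wmax w)%:R).
  by move=> _ [x [feas [budget ->]]]; apply: frac_value_le_sol_vec.
have E_sup : has_sup E.
  by split; [exact: ex_intro _ _ E_sol | exact: ex_intro _ _ E_ub].
have := sup_upper_bound E_sup E_sol; have := ge_sup (ex_intro _ _ E_sol) E_ub.
by split; lra.
Qed.
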